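(* Let $1\le p<q$ be integers (not necessarily coprime), and let $u=0^{q-p}1^{p}$. Then for every binary word $w\in\{0,1\}^q$ with exactly $p$ ones, $$\mathcal{S}_i(u)\le \mathcal{S}_i(w)\quad\text{for all } 1\le i\le q.$$ In other words, the orbit of $u$ is the greatest element of the set $\mathbb{W}_{p,q}$ of orbits with respect to the majorization order $\prec$.
   Context: Binary alphabet $\{0,1\}$ with $0<1$; words of equal length are compared lexicographically. For a word $x=x_1\cdots x_n$, $(x)_2=\sum_{i=1}^n x_i2^{n-i}$. The cyclic shift is $\sigma(w_1\cdots w_n)=w_2\cdots w_nw_1$. For $w\in\{0,1\}^q$, the orbit $\mathcal{O}(w)=(\mathcal{O}_1(w),\dots,\mathcal{O}_q(w))$ is the list of the $q$ words $w,\sigma(w),\dots,\sigma^{q-1}(w)$ arranged in lexicographic order from smallest to largest (with repetition), and the base-2 orbit is $\mathcal{I}(w)=(\mathcal{I}_1(w),\dots,\mathcal{I}_q(w))$ with $\mathcal{I}_k(w)=(\mathcal{O}_k(w))_2$. Partial sums: $\mathcal{S}_i(w)=\sum_{k=1}^i\mathcal{I}_k(w)$. $\mathbb{W}_{p,q}$ denotes the set of orbits (words up to cyclic shift) of binary words of length $q$ with $p$ ones. For orbits $w,w'$, $w'\prec w$ means $\mathcal{S}_i(w')\ge\mathcal{S}_i(w)$ for all $1\le i\le q$. *)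

(* Binary words are seq bool with false = 0 < true = 1. *)
From mathcomp Require Import all_boot.
Set Implicit Arguments. Unset Strict Implicit. Unset Printing Implicit Defensive.

Fixpoint lexle (x y : seq bool) : bool :=
  match x, y with
  | [::], _ => true
  | _ :: _, [::] => false
  | a :: x', b :: y' => (a < b) || ((a == b) && lexle x' y')
  end.

Definition val2 (x : seq bool) : nat := foldl (fun acc (b : bool) => acc.*2 + b) 0 x.

Definition sigma (w : seq bool) : seq bool := rot 1 w.

Definition orbit_words (w : seq bool) : seq (seq bool) :=
  sort lexle [seq iter k sigma w | k <- iota 0 (size w)].

Definition orbit_vals (w : seq bool) : seq nat := map val2 (orbit_words w).

Definition Spart (w : seq bool) (i : nat) : nat := \sum_(k <- take i (orbit_vals w)) k.

Definition u_word (p q : nat) : seq bool := nseq (q - p) false ++ nseq p true.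

From mathcomp Require Import all_boot zify.

(* Let [V] be the increasing list of the values of the [q] rotations of [w], which has [p]
   ones. A rotation starting with 0 is below [2^(q-1)] and one starting with 1 is not, so the
   first [q - p] entries of [V] are rotations at zeros of [w] and the last [p] rotations at
   ones. The key estimate: any [n] rotations at zeros of [w] add up to at least
   [(2^p - 1)(2^n - 1)]. For [i <= q - p] this bounds [S_i(w)] below by
   [(2^p - 1)(2^i - 1)], the sum of the first [i] rotations of [u]. For [i > q - p], the
   estimate for the complementary word bounds the sum of the last [q - i] entries of [V]
   above by the sum of the rotations of [u] at its first [q - i] ones; and the sum of all
   rotations is [p (2^q - 1)] for both words. *)

Set Implicit Arguments.
Unset Strict Implicit.
Unset Printing Implicit Defensive.

Lemma val2_foldl a (x : seq bool) :
  foldl (fun acc (b : bool) => acc.*2 + b) a x = a * 2 ^ size x + val2 x.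
Proof.
elim: x a => [|b x IH] a /=; first by rewrite muln1 addn0.
by rewrite /val2 /= !IH expnS; lia.
Qed.

Lemma val2_cons b x : val2 (b :: x) = b * 2 ^ size x + val2 x.
Proof. by rewrite {1}/val2 /= val2_foldl. Qed.

Lemma val2_cat x y : val2 (x ++ y) = val2 x * 2 ^ size y + val2 y.
Proof. by rewrite {1}/val2 foldl_cat val2_foldl. Qed.

Lemma val2_ltn x : val2 x < 2 ^ size x.
Proof. by elim: x => [|b x IH] //; rewrite val2_cons /= expnS; case: b => /=; lia. Qed.

Lemma val2_nseq_false n : val2 (nseq n false) = 0.
Proof. by elim: n => [|n IH] //; rewrite /= val2_cons IH. Qed.

Lemma val2_nseq_true n : val2 (nseq n true) = 2 ^ n - 1.
Proof.
elim: n => [|n IH] //; rewrite /= val2_cons size_nseq IH expnS.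
by have := expn_gt0 2 n; lia.
Qed.

Lemma val2_map_negb x : val2 (map negb x) + val2 x = 2 ^ size x - 1.
Proof.
elim: x => [|b x IH] //; rewrite /= !val2_cons size_map expnS.
by have := expn_gt0 2 (size x); case: b => /=; lia.
Qed.

Lemma val2_zeros_le (x : seq bool) j : j <= count negb x -> val2 x + 2 ^ j <= 2 ^ size x.
Proof.
elim: x j => [|b x IH] [|j] //=; rewrite val2_cons expnS.
- by have := IH 0 isT; lia.
- by case: b => /= hj; have := IH _ hj; rewrite ?expnS; lia.
Qed.

Lemma lexle_total : total lexle.
Proof.
elim=> [|a x IH] [|b y] //=.
by case: a; case: b => //=; rewrite ?orbF ?orbT //; exact: IH.
Qed.

Lemma lexle_val2 x y : size x = size y -> lexle x y -> val2 x <= val2 y.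
Proof.
elim: x y => [|a x IH] [|b y] //= [hs]; rewrite !val2_cons hs.
case: a; case: b => //= h.
- by rewrite !mul1n leq_add2l; exact: IH.
- by have := val2_ltn x; rewrite hs; lia.
- by rewrite !mul0n !add0n; exact: IH.
Qed.

Definition rotval (w : seq bool) (k : nat) : nat := val2 (rot k w).

Definition rotvals (w : seq bool) : seq nat := map (rotval w) (iota 0 (size w)).

Lemma size_rotvals w : size (rotvals w) = size w.
Proof. by rewrite size_map size_iota. Qed.

Lemma rot_cons_nth (T : Type) (x0 : T) (s : seq T) k : k < size s ->
  rot k s = nth x0 s k :: (drop k.+1 s ++ take k s).
Proof. by move=> hk; rewrite /rot (drop_nth x0 hk). Qed.

Lemma rot_succ_rcons (T : Type) (x0 : T) (s : seq T) k : k < size s ->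
  rot k.+1 s = rcons (drop k.+1 s ++ take k s) (nth x0 s k).
Proof. by move=> hk; rewrite /rot (take_nth x0 hk) rcons_cat. Qed.

Section RotationValues.

Variables (w : seq bool) (k : nat).
Hypothesis hk : k < size w.

Let tail := drop k.+1 w ++ take k w.

Let size_tail : size tail = (size w).-1.
Proof. by rewrite size_cat size_drop size_take hk; lia. Qed.

Lemma rotval_ltn_half : (rotval w k < 2 ^ (size w).-1) = ~~ nth false w k.
Proof.
rewrite /rotval (rot_cons_nth false hk) val2_cons -/tail size_tail.
by have := val2_ltn tail; rewrite size_tail; case: (nth false w k) => /=; lia.
Qed.

Lemma rotvalS : rotval w k.+1 + nth false w k * 2 ^ size w = 2 * rotval w k + nth false w k.
Proof.
rewrite /rotval (rot_cons_nth false hk) (rot_succ_rcons false hk) -cats1 -/tail.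
rewrite val2_cat !val2_cons size_tail (_ : val2 [::] = 0) // expn1 expn0.
have -> : 2 ^ size w = 2 * 2 ^ (size w).-1 by rewrite -expnS; congr (2 ^ _); lia.
by case: (nth false w k) => /=; lia.
Qed.

End RotationValues.

Lemma rotval_map_negb w k : rotval (map negb w) k + rotval w k = 2 ^ size w - 1.
Proof. by rewrite /rotval -map_rot val2_map_negb size_rot. Qed.

Lemma rotval_rot1 w k : k < size w -> rotval (rot 1 w) k = rotval w k.+1.
Proof. by move=> hk; rewrite /rotval -rotD ?addn1. Qed.

Lemma rotvals_rot1 w : rotvals (rot 1 w) = rot 1 (rotvals w).
Proof.
rewrite /rotvals size_rot -map_rot.
transitivity [seq rotval w k.+1 | k <- iota 0 (size w)].
  by apply/eq_in_map => k; rewrite mem_iota => /rotval_rot1.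
have rotval_size : rotval w (size w) = rotval w 0 by rewrite /rotval rot_size rot0.
move: rotval_size; case: (size w) => [|n] // rotval_size.
rewrite [in RHS]/= rot1_cons map_rcons -rotval_size -cats1 -(addn1 n) iotaD.
by rewrite map_cat /= add0n addn1 (iotaDl 1 0) -map_comp.
Qed.

Lemma rotvals_rot t w : t <= size w -> rotvals (rot t w) = rot t (rotvals w).
Proof.
elim: t => [|t IH] ht; first by rewrite !rot0.
by rewrite rotS // rotvals_rot1 IH ?(ltnW ht) // -rotS // size_rotvals.
Qed.

Lemma sumn_rotvals w : sumn (rotvals w) = count id w * (2 ^ size w - 1).
Proof.
set q := size w; set R := \sum_(k <- iota 0 q) rotval w k.
set c := \sum_(k <- iota 0 q) nth false w k.
have -> : sumn (rotvals w) = R by rewrite sumnE big_map.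
have shiftR : \sum_(k <- iota 0 q) rotval w k.+1 = R.
  transitivity (sumn (rotvals (rot 1 w))); last by rewrite rotvals_rot1 sumn_rot sumnE big_map.
  rewrite sumnE big_map size_rot; apply: eq_big_seq => k.
  by rewrite mem_iota => /rotval_rot1.
have -> : count id w = c.
  by rewrite -sumn_count -{1}(mkseq_nth false w) -map_comp sumnE big_map.
have summed : R + c * 2 ^ q = 2 * R + c.
  rewrite -{1}shiftR /R /c big_distrl big_distrr -!big_split /=.
  by apply: eq_big_seq => k; rewrite mem_iota => /andP[_ hk]; exact: rotvalS.
by rewrite mulnBr muln1; have := expn_gt0 2 q; lia.
Qed.

Lemma iter_sigma w k : k <= size w -> iter k sigma w = rot k w.
Proof.
elim: k => [|k IH] hk /=; first by rewrite rot0.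
by rewrite IH ?(ltnW hk) // /sigma -rotD ?add1n.
Qed.

Lemma perm_orbit_vals w : perm_eq (orbit_vals w) (rotvals w).
Proof.
rewrite /orbit_vals /orbit_words; apply: (perm_trans (perm_map val2 (permEl (perm_sort lexle _)))).
rewrite -map_comp (_ : map _ _ = rotvals w) //.
by apply/eq_in_map => k; rewrite mem_iota /= => hk; rewrite iter_sigma ?(ltnW hk).
Qed.

Lemma sorted_orbit_vals w : sorted leq (orbit_vals w).
Proof.
apply: (@homo_sorted_in _ _ [pred x | size x == size w]); last first.
- exact: (sort_sorted lexle_total).
- apply/allP => x; rewrite mem_sort => /mapP[k]; rewrite mem_iota => /andP[_ hk] ->.
  by rewrite /= iter_sigma ?(ltnW hk) // size_rot.
- by move=> x y /eqP hx /eqP hy; apply: lexle_val2; rewrite hx hy.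
Qed.

Lemma count_orbit_vals_small w : count (fun x => x < 2 ^ (size w).-1) (orbit_vals w) = count negb w.
Proof.
rewrite (permP (perm_orbit_vals w)) /rotvals count_map -[in RHS](mkseq_nth false w) count_map.
by apply: eq_in_count => k; rewrite mem_iota => /andP[_ /rotval_ltn_half].
Qed.

Lemma sumn_orbit_vals w : sumn (orbit_vals w) = count id w * (2 ^ size w - 1).
Proof. by rewrite (perm_sumn (perm_orbit_vals w)) sumn_rotvals. Qed.

Section SortedSums.

Implicit Types (V s t : seq nat).

Lemma sumn_take_rem_le V a i : sorted leq V -> a \in V ->
  sumn (take i.+1 V) <= a + sumn (take i (rem a V)).
Proof.
elim: V i => [|b V IH] i //= hV; rewrite in_cons.
case: (eqVneq b a) => [-> //| neq_ba] /= aV.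
have b_le_a : b <= a by apply: (allP (order_path_min leq_trans hV)).
case: i => [|i] /=; first by rewrite take0 /=; lia.
by rewrite addnCA leq_add2l; exact: IH (path_sorted hV) aV.
Qed.

(* [perm_eq V (s ++ t)] says that [s] is a sub-multiset of [V]. *)
Lemma sumn_take_sorted V s t : sorted leq V -> perm_eq V (s ++ t) ->
  sumn (take (size s) V) <= sumn s.
Proof.
elim: s V => [|a s IH] V hV hp /=; first by rewrite take0.
have aV : a \in V by rewrite (perm_mem hp) mem_head.
apply: leq_trans (sumn_take_rem_le _ hV aV) _; rewrite leq_add2l.
apply: IH; first exact: (subseq_sorted leq_trans (rem_subseq a V) hV).
by rewrite -(perm_cons a) (perm_trans _ hp) // perm_sym perm_to_rem.
Qed.

Lemma sumn_drop_sorted V s t : sorted leq V -> perm_eq V (s ++ t) ->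
  sumn t <= sumn (drop (size s) V).
Proof.
move=> hV hp; have := sumn_take_sorted hV hp.
have := perm_sumn hp; rewrite -{1}(cat_take_drop (size s) V) !sumn_cat; lia.
Qed.

Lemma sorted_take_ltn V H i : sorted leq V ->
  i <= count (fun x => x < H) V -> all (fun x => x < H) (take i V).
Proof.
elim: V i => [|a V IH] [|i] //= hV; have aV := order_path_min leq_trans hV.
case: (ltnP a H) => [aH | Ha] /=; first by rewrite add1n ltnS => /(IH _ (path_sorted hV)).
rewrite (@eq_in_count _ _ pred0) ?count_pred0 // => x /(allP aV) ax.
by rewrite /= ltnNge (leq_trans Ha ax).
Qed.

Lemma sorted_drop_geq V H i : sorted leq V ->
  count (fun x => x < H) V <= i -> all (fun x => H <= x) (drop i V).
Proof.
elim: V i => [|a V IH] i //= hV; have aV := order_path_min leq_trans hV.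
case: (ltnP a H) => [aH | Ha] /=.
  by case: i => [|i] //; rewrite add1n ltnS => /(IH _ (path_sorted hV)).
move=> _; apply/allP => x /mem_drop; rewrite in_cons => /predU1P[-> //|/(allP aV)].
exact: leq_trans.
Qed.

End SortedSums.

Lemma sumn_map_add (T : Type) (f g : T -> nat) (s : seq T) :
  sumn [seq f x + g x | x <- s] = sumn (map f s) + sumn (map g s).
Proof. by rewrite !sumnE !big_map big_split. Qed.

Lemma sumn_map_const (T : Type) (c : nat) (s : seq T) : sumn [seq c | _ <- s] = c * size s.
Proof. by elim: s => [|x s IH] /=; rewrite ?muln0 // IH mulnS. Qed.

Lemma mem_mask_nth (T : eqType) (x0 : T) (m : bitseq) (s : seq T) k :
  k < size s -> nth false m k -> nth x0 s k \in mask m s.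
Proof.
elim: s m k => [|x s IH] [|c m] [|k] //= hk; first by move=> ->; rewrite mem_head.
by move/(IH m k hk); case: c => // h; rewrite in_cons h orbT.
Qed.

Lemma mask_nthE (m w : bitseq) : mask m w = map (nth false w) (mask m (iota 0 (size w))).
Proof. by rewrite map_mask -/(mkseq _ _) mkseq_nth. Qed.

Lemma count_mask_zeros (m w : bitseq) : size m = size w ->
  all negb (mask m w) -> count id m <= count negb w.
Proof.
move=> hs; rewrite all_count (size_mask hs) => /eqP <-.
exact/leq_count_subseq/mask_subseq.
Qed.

Lemma small_rotvals_mask_zeros (m w : bitseq) :
  all (fun x => x < 2 ^ (size w).-1) (mask m (rotvals w)) -> all negb (mask m w).
Proof.
rewrite /rotvals -map_mask mask_nthE !all_map => /allP small; apply/allP => k km.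
have kw : k < size w by have := mem_mask km; rewrite mem_iota.
by have := small k km; rewrite /= rotval_ltn_half.
Qed.

Lemma large_rotvals_mask_ones (m w : bitseq) :
  all (fun x => 2 ^ (size w).-1 <= x) (mask m (rotvals w)) -> all negb (mask m (map negb w)).
Proof.
rewrite /rotvals -map_mask mask_nthE size_map !all_map => /allP large; apply/allP => k km.
have kw : k < size w by have := mem_mask km; rewrite mem_iota.
by have := large k km; rewrite /= leqNgt rotval_ltn_half // (nth_map false) ?negbK.
Qed.

Definition rotsum (w m : bitseq) : nat := sumn (mask m (rotvals w)).

Lemma rotsum_rot t w m : t <= size w -> size m = size w ->
  rotsum (rot t w) (rot t m) = rotsum w m.
Proof. by move=> ht hs; rewrite /rotsum rotvals_rot // mask_rot ?size_rotvals // sumn_rot. Qed.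

Lemma rotsum_map_negb w m : size m = size w ->
  rotsum (map negb w) m + rotsum w m = count id m * (2 ^ size w - 1).
Proof.
move=> hs; rewrite /rotsum /rotvals size_map -!map_mask -sumn_map_add.
rewrite (eq_map (fun k => rotval_map_negb w k)) sumn_map_const size_mask ?size_iota //.
by rewrite mulnC.
Qed.

(* Appending a 0 to [v] raises its [k]-th rotation value by the [k]-th tail weight. *)
Definition tail_weights (v : bitseq) : seq nat :=
  [seq 2 ^ k * val2 (drop k v) | k <- iota 0 (size v)].

Lemma tail_weights_cons b v :
  tail_weights (b :: v) = val2 (b :: v) :: map (muln 2) (tail_weights v).
Proof.
rewrite /tail_weights /= expn0 mul1n (iotaDl 1 0) -!map_comp; congr (_ :: _).
by apply: eq_map => k /=; rewrite expnS mulnA.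
Qed.

Lemma rotvals_rcons0 v : rotvals (rcons v false) =
  rcons [seq rotval v k + 2 ^ k * val2 (drop k v) | k <- iota 0 (size v)] (val2 v).
Proof.
rewrite /rotvals size_rcons -addn1 iotaD map_cat cats1 add0n; congr rcons.
- apply/eq_in_map => k; rewrite mem_iota add0n => /andP[_ hk].
  rewrite /rotval /rot -cats1 drop_cat take_cat hk -catA !val2_cat size_takel ?(ltnW hk) //.
  by rewrite (_ : val2 (_ :: _) = 0) // size_cat /= size_takel ?(ltnW hk) // expnD expn1; lia.
- by rewrite /rotval -cats1 rot_size_cat val2_cons.
Qed.

Lemma rotsum_rcons0 v m : size m = size v ->
  rotsum (rcons v false) (rcons m true) = rotsum v m + sumn (mask m (tail_weights v)) + val2 v.
Proof.
move=> hs; rewrite /rotsum rotvals_rcons0 mask_rcons ?size_map ?size_iota // sumn_cat /= addn0.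
by rewrite /rotvals /tail_weights -!map_mask sumn_map_add.
Qed.

Lemma sumn_mask_double (m : bitseq) (s : seq nat) :
  sumn (mask m (map (muln 2) s)) = 2 * sumn (mask m s).
Proof. by rewrite -map_mask; elim: (mask m s) => [|x t IH] //=; rewrite IH mulnDr. Qed.

Lemma val2_tail_weights_ge v m : size m = size v -> all negb (mask m v) ->
  (2 ^ count id v - 1) * 2 ^ count id m <= val2 v + sumn (mask m (tail_weights v)).
Proof.
elim: v m => [|b v IH] [|c m] // [hs]; rewrite tail_weights_cons val2_cons.
have hP : 0 < 2 ^ count id v by rewrite expn_gt0.
case: c; case: b => //= hz; have := IH m hs hz;
  rewrite sumn_mask_double ?add0n ?add1n ?expnS ?mul0n ?mul1n ?add0n.
- by nia.
- by have := val2_zeros_le (count_mask_zeros hs hz); nia.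
- by nia.
Qed.

(* Induction on the number of chosen zeros: rotating one of them to the end of the word
   turns the rotation values into those of the shorter word plus the [tail_weights]. *)
Lemma rotsum_zeros_ge w m : size m = size w -> all negb (mask m w) ->
  (2 ^ count id w - 1) * (2 ^ count id m - 1) <= rotsum w m.
Proof.
move hc: (count id m) => n; elim: n w m hc => [|n IH] w m hc hs hz.
  by rewrite expn0 subnn muln0.
have /(has_nthP false)[z zm mz] : has id m by rewrite has_count hc.
have zw : z < size w by rewrite -hs.
have wz : nth false w z = false by apply/negbTE/(allP hz)/mem_mask_nth.
set v := drop z.+1 w ++ take z w; set m' := drop z.+1 m ++ take z m.
have Ew : rot z.+1 w = rcons v false by rewrite (rot_succ_rcons false zw) wz.
have Em : rot z.+1 m = rcons m' true by rewrite (rot_succ_rcons false zm) mz.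
have hs' : size m' = size v by rewrite !size_cat !size_drop !size_take hs.
have hz' : all negb (mask m' v).
  have : all negb (mask (rot z.+1 m) (rot z.+1 w)).
    by rewrite mask_rot // (perm_all _ (permEl (perm_rot _ _))).
  by rewrite Ew Em mask_rcons // all_cat => /andP[].
have hc' : count id m' = n.
  by have := permP (permEl (perm_rot z.+1 m)) id; rewrite Em -cats1 count_cat /=; lia.
have hv : count id v = count id w.
  by have := permP (permEl (perm_rot z.+1 w)) id; rewrite Ew -cats1 count_cat /=; lia.
rewrite -(rotsum_rot zw hs) Ew Em rotsum_rcons0 //.
have := IH v m' hc' hs' hz'; have := val2_tail_weights_ge hs' hz'.
rewrite hc' hv expnS; have := expn_gt0 2 n; set P := 2 ^ count id w - 1; nia.
Qed.

Lemma count_id_negb (w : bitseq) : count id w + count negb w = size w.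
Proof. exact: count_predC. Qed.

Lemma size_orbit_vals w : size (orbit_vals w) = size w.
Proof. by rewrite (perm_size (perm_orbit_vals w)) size_rotvals. Qed.

Lemma orbit_vals_submask w s t : perm_eq (orbit_vals w) (s ++ t) ->
  exists2 m, size m = size w & perm_eq s (mask m (rotvals w)).
Proof.
move=> hp; rewrite -(size_rotvals w); apply/count_maskP => x.
by rewrite -(permP (perm_orbit_vals w)) (permP hp) count_cat leq_addr.
Qed.

Lemma sumn_take_orbit_ge w i : i <= count negb w ->
  (2 ^ count id w - 1) * (2 ^ i - 1) <= sumn (take i (orbit_vals w)).
Proof.
move=> hi; set V := orbit_vals w.
have [|m hm hpm] := @orbit_vals_submask w (take i V) (drop i V); first by rewrite cat_take_drop.
have small : all (fun x => x < 2 ^ (size w).-1) (take i V).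
  by apply: sorted_take_ltn (sorted_orbit_vals w) _; rewrite count_orbit_vals_small.
have hz : all negb (mask m w) by apply: small_rotvals_mask_zeros; rewrite -(perm_all _ hpm).
have hcm : count id m = i.
  rewrite -(size_mask (etrans hm (esym (size_rotvals w)))) -(perm_size hpm) size_takel //.
  by rewrite size_orbit_vals (leq_trans hi) ?count_size.
by rewrite (perm_sumn hpm) -hcm; exact: rotsum_zeros_ge.
Qed.

Lemma sumn_drop_orbit_le w j : j <= count id w ->
  (2 ^ count negb w - 1) * (2 ^ j - 1) + sumn (drop (size w - j) (orbit_vals w))
  <= j * (2 ^ size w - 1).
Proof.
move=> hj; set V := orbit_vals w.
have [|m hm hpm] := @orbit_vals_submask w (drop (size w - j) V) (take (size w - j) V).
  by rewrite perm_sym perm_catC cat_take_drop.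
have large : all (fun x => 2 ^ (size w).-1 <= x) (drop (size w - j) V).
  apply: sorted_drop_geq (sorted_orbit_vals w) _; rewrite count_orbit_vals_small.
  by have := count_id_negb w; lia.
have hz : all negb (mask m (map negb w)).
  by apply: large_rotvals_mask_ones; rewrite -(perm_all _ hpm).
have hcm : count id m = j.
  rewrite -(size_mask (etrans hm (esym (size_rotvals w)))) -(perm_size hpm) size_drop.
  by rewrite size_orbit_vals; have := count_size id w; lia.
have := rotsum_zeros_ge (etrans hm (esym (size_map negb w))) hz.
have -> : count id (map negb w) = count negb w by rewrite count_map.
by have := rotsum_map_negb hm; rewrite hcm (perm_sumn hpm) /rotsum; lia.
Qed.

Lemma sumn_geometric c i : sumn [seq c * 2 ^ k | k <- iota 0 i] = c * (2 ^ i - 1).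
Proof.
elim: i => [|i IH]; first by rewrite muln0.
rewrite -[i.+1]addn1 iotaD map_cat sumn_cat IH /= add0n addn0 expnD expn1 !mulnBr muln1.
by have := expn_gt0 2 i; nia.
Qed.

Section ExtremalWord.

Variables z p : nat.

Let u := nseq z false ++ nseq p true.

Lemma rotval_u_low k : k < z -> rotval u k = (2 ^ p - 1) * 2 ^ k.
Proof.
move=> hk; rewrite /rotval /rot drop_cat take_cat size_nseq hk drop_nseq take_nseq ?(ltnW hk) //.
by rewrite !val2_cat !val2_nseq_false val2_nseq_true !size_nseq mul0n add0n addn0.
Qed.

Lemma rotval_u_high a : a < p -> rotval u (z + a) + (2 ^ z - 1) * 2 ^ a = 2 ^ (z + p) - 1.
Proof.
move=> ha; rewrite /rotval /rot drop_cat take_cat size_nseq ltnNge leq_addr /= addKn.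
rewrite drop_nseq take_nseq ?(ltnW ha) // !val2_cat val2_nseq_false !val2_nseq_true.
rewrite !size_cat !size_nseq mul0n add0n (_ : z + p = (p - a) + (z + a)); last by lia.
rewrite !expnD; have := expn_gt0 2 (p - a); have := expn_gt0 2 z; have := expn_gt0 2 a.
set A := 2 ^ (p - a); set Z := 2 ^ z; set X := 2 ^ a => hX hZ hA.
have : (A - 1) * (Z * X) + (X - 1) + (Z - 1) * X + 1 = A * (Z * X) by rewrite !mulnBl !mul1n; nia.
lia.
Qed.

Lemma sumn_rotval_u_high j : j <= p ->
  sumn [seq rotval u k | k <- iota z j] + (2 ^ z - 1) * (2 ^ j - 1) = j * (2 ^ (z + p) - 1).
Proof.
elim: j => [|j IH] hj; first by rewrite muln0.
rewrite expnS -[j.+1]addn1 iotaD map_cat sumn_cat /= addn0.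
have := rotval_u_high hj; have := IH (ltnW hj); have := expn_gt0 2 j.
set X := 2 ^ j; set Y := 2 ^ z - 1; set M := 2 ^ (z + p) - 1.
by rewrite !mulnBr !muln1 mulnDl mul1n; nia.
Qed.

Lemma sumn_take_orbit_u_le i : i <= z -> sumn (take i (orbit_vals u)) <= (2 ^ p - 1) * (2 ^ i - 1).
Proof.
move=> hi; have su : size u = z + p by rewrite size_cat !size_nseq.
have hp : perm_eq (orbit_vals u) (take i (rotvals u) ++ drop i (rotvals u)).
  by rewrite cat_take_drop perm_orbit_vals.
have := sumn_take_sorted (sorted_orbit_vals u) hp.
rewrite size_takel ?size_rotvals ?su; last by lia.
rewrite /rotvals -map_take take_iota su (minn_idPl (leq_trans hi (leq_addr _ _))).
rewrite (_ : map _ _ = [seq (2 ^ p - 1) * 2 ^ k | k <- iota 0 i]) ?sumn_geometric //.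
by apply/eq_in_map => k; rewrite mem_iota => /andP[_ ki]; apply/rotval_u_low/(leq_trans ki).
Qed.

Lemma sumn_drop_orbit_u_ge j : j <= p ->
  j * (2 ^ (z + p) - 1) <= (2 ^ z - 1) * (2 ^ j - 1) + sumn (drop (z + p - j) (orbit_vals u)).
Proof.
move=> hj; have su : size u = z + p by rewrite size_cat !size_nseq.
set A := [seq rotval u k | k <- iota 0 z]; set B := [seq rotval u k | k <- iota z j].
set D := [seq rotval u k | k <- iota (z + j) (p - j)].
have hp : perm_eq (orbit_vals u) ((A ++ D) ++ B).
  rewrite perm_sym perm_catAC perm_sym -catA /A /B /D -!map_cat -iotaD subnKC //.
  rewrite -[iota z p]/(iota (0 + z) p) -iotaD -su.
  exact: perm_orbit_vals.
have := sumn_drop_sorted (sorted_orbit_vals u) hp.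
rewrite size_cat !size_map !size_iota (_ : z + (p - j) = z + p - j); last by lia.
by have := sumn_rotval_u_high hj; rewrite -/B; lia.
Qed.

End ExtremalWord.

Lemma u_word_count w :
  u_word (count id w) (size w) = nseq (count negb w) false ++ nseq (count id w) true.
Proof. by rewrite /u_word -count_id_negb addKn. Qed.

Lemma sumn_orbit_u_word w : sumn (orbit_vals (u_word (count id w) (size w))) = sumn (orbit_vals w).
Proof.
rewrite u_word_count !sumn_orbit_vals count_cat size_cat !count_nseq !size_nseq /=.
by rewrite mul0n mul1n add0n addnC count_id_negb.
Qed.

Lemma sumn_take_orbit_u_word_le w i : i <= count negb w ->
  sumn (take i (orbit_vals (u_word (count id w) (size w)))) <= sumn (take i (orbit_vals w)).
Proof.
by move=> hi; rewrite u_word_count (leq_trans (sumn_take_orbit_u_le _ hi)) ?sumn_take_orbit_ge.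
Qed.

Lemma sumn_drop_orbit_u_word_ge w i : count negb w <= i <= size w ->
  sumn (drop i (orbit_vals w)) <= sumn (drop i (orbit_vals (u_word (count id w) (size w)))).
Proof.
case/andP=> zi iw; have hj : size w - i <= count id w by have := count_id_negb w; lia.
have := sumn_drop_orbit_u_ge (count negb w) hj; have := sumn_drop_orbit_le hj.
rewrite u_word_count [count negb w + _]addnC count_id_negb subKn //.
move=> dw du; rewrite -(leq_add2l ((2 ^ count negb w - 1) * (2 ^ (size w - i) - 1))).
exact: leq_trans dw du.
Qed.

Lemma Spart_sumn w i : Spart w i = sumn (take i (orbit_vals w)).
Proof. by rewrite /Spart sumnE. Qed.

Theorem theorem4 (p q : nat) (w : seq bool) :
  1 <= p -> p < q -> size w = q -> count id w = p ->
  forall i, 1 <= i <= q -> Spart (u_word p q) i <= Spart w i.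
Proof.
move=> _ _ <- <- i /andP[_ iw]; rewrite !Spart_sumn.
case: (leqP i (count negb w)) => zi; first exact: sumn_take_orbit_u_word_le.
set u := u_word (count id w) (size w).
have drop_le : sumn (drop i (orbit_vals w)) <= sumn (drop i (orbit_vals u)).
  by apply: sumn_drop_orbit_u_word_ge; rewrite (ltnW zi).
have tot : sumn (take i (orbit_vals u)) + sumn (drop i (orbit_vals u))
          = sumn (take i (orbit_vals w)) + sumn (drop i (orbit_vals w)).
  by rewrite -!sumn_cat !cat_take_drop sumn_orbit_u_word.
by rewrite -(leq_add2r (sumn (drop i (orbit_vals u)))) tot leq_add2l.
Qed.
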